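(* Let $\theta\in[\pi,2\pi)$. Then for all $x,y\in S_\theta$, $p_{S_\theta}(x,y)\le s_{S_\theta}(x,y)$, and this inequality is sharp.
   Context: $S_\theta=\{x\in\mathbb{C}:0<\arg(x)<\theta\}$. For a domain $G\subsetneq\mathbb{C}$, $d_G(x)=\inf\{|x-z|:z\in\partial G\}$, $s_G(x,y)=\frac{|x-y|}{\inf_{z\in\partial G}(|x-z|+|z-y|)}$, $p_G(x,y)=\frac{|x-y|}{\sqrt{|x-y|^2+4d_G(x)d_G(y)}}$. *)

From HB Require Import structures.
From mathcomp Require Import all_boot all_order all_algebra.
From mathcomp Require Import all_classical all_reals all_analysis.
Set Implicit Arguments. Unset Strict Implicit. Unset Printing Implicit Defensive.
Import Order.TTheory GRing.Theory Num.Theory numFieldNormedType.Exports.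
Local Open Scope classical_set_scope.
Local Open Scope ring_scope.

(* Euclidean modulus |z| of z = z.1 + i z.2 *)
Definition cabs {R : realType} (z : R * R) : R := Num.sqrt (z.1 ^+ 2 + z.2 ^+ 2).

Definition csub {R : realType} (x z : R * R) : R * R := (x.1 - z.1, x.2 - z.2).

(* S_theta = {x : 0 < arg x < theta}, arg taken in [0, 2pi):
   x = r e^{it} with r > 0 and 0 < t < theta *)
Definition Stheta {R : realType} (theta : R) : set (R * R) :=
  [set x | exists r t : R, 0 < r /\ 0 < t /\ t < theta /\ x = (r * cos t, r * sin t)].

(* topological boundary of G (product topology on R*R = Euclidean topology) *)
Definition bdry {R : realType} (G : set (R * R)) : set (R * R) :=
  closure G `\` interior G.

Definition dG {R : realType} (G : set (R * R)) (x : R * R) : R :=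
  inf [set cabs (csub x z) | z in bdry G].

Definition sG {R : realType} (G : set (R * R)) (x y : R * R) : R :=
  cabs (csub x y) / inf [set cabs (csub x z) + cabs (csub z y) | z in bdry G].

Definition pG {R : realType} (G : set (R * R)) (x y : R * R) : R :=
  cabs (csub x y) / Num.sqrt (cabs (csub x y) ^+ 2 + 4 * dG G x * dG G y).

From HB Require Import structures.
From mathcomp Require Import all_boot all_order all_algebra.
From mathcomp Require Import all_classical all_reals all_analysis.
From mathcomp Require Import ring lra.
Set Implicit Arguments. Unset Strict Implicit. Unset Printing Implicit Defensive.
Import Order.TTheory GRing.Theory Num.Theory numFieldNormedType.Exports.
Local Open Scope classical_set_scope.
Local Open Scope ring_scope.

(* For pi <= theta < 2 pi the sector S_theta is the union of two open
   half-planes, so its complement C is a closed convex cone whose boundary is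
   the boundary of S_theta.  Let x, y be in S_theta, a, b on the boundary,
   s = |x - a|, t = |y - b|, and let z divide [a, b] in the ratio s : t.
   A Stewart-type identity and Cauchy-Schwarz give
   (|x - z| + |z - y|)^2 <= |x - y|^2 + 4 s t.  As C is convex, z lies in C,
   and sliding z towards x until it reaches the boundary can only shorten
   |x - z| + |z - y|.  Taking infima over a and b yields
   (inf_{z in bdry} |x - z| + |z - y|)^2 <= |x - y|^2 + 4 d(x) d(y), that is
   p <= s.  For x = i and y = 2i both sides equal 1/3, so the bound is sharp. *)

Section RealFacts.
Variable R : realFieldType.

Lemma mulr_sqrD_le (p q A B : R) :
  p * q * (A + B) ^+ 2 <= (p + q) * (q * A ^+ 2 + p * B ^+ 2).
Proof.
rewrite -subr_ge0.
have -> : (p + q) * (q * A ^+ 2 + p * B ^+ 2) - p * q * (A + B) ^+ 2 = (q * A - p * B) ^+ 2.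
  by ring.
exact: sqr_ge0.
Qed.

Lemma affine_exit_time (P0 Q0 P1 Q1 : R) :
  P0 <= 0 -> Q0 <= 0 -> 0 < P1 \/ 0 < Q1 ->
  exists t, 0 <= t <= 1 /\
    P0 + t * (P1 - P0) <= 0 /\ Q0 + t * (Q1 - Q0) <= 0 /\
    (P0 + t * (P1 - P0) = 0 \/ Q0 + t * (Q1 - Q0) = 0).
Proof.
wlog P1_gt0 : P0 Q0 P1 Q1 / 0 < P1 => [sym P0_le0 Q0_le0 [P1_gt0|Q1_gt0]|].
  exact: sym P0 Q0 P1 Q1 P1_gt0 P0_le0 Q0_le0 (or_introl P1_gt0).
  have [t [t01 [? [? eq0]]]] := sym Q0 P0 Q1 P1 Q1_gt0 Q0_le0 P0_le0 (or_introl Q1_gt0).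
  by exists t; do !split => //; case: eq0; [right|left].
move=> P0_le0 Q0_le0 _.
have dP_gt0 : 0 < P1 - P0 by lra.
pose tP := - P0 / (P1 - P0).
have tPE : tP * (P1 - P0) = - P0 by rewrite divfK ?gt_eqF.
have tP01 : 0 <= tP <= 1.
  by apply/andP; split; [rewrite divr_ge0 //; lra | rewrite ler_pdivrMr // mul1r; lra].
have [QtP_le0|QtP_gt0] := lerP (Q0 + tP * (Q1 - Q0)) 0.
  by exists tP; do !split => //; [lra|left; lra].
have dQ_gt0 : 0 < Q1 - Q0.
  rewrite ltNge; apply/negP => dQ_le0.
  have : tP * (Q1 - Q0) <= 0 by rewrite mulr_ge0_le0 //; case/andP: tP01.
  lra.
pose tQ := - Q0 / (Q1 - Q0).
have tQE : tQ * (Q1 - Q0) = - Q0 by rewrite divfK ?gt_eqF.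
have tQ_le_tP : tQ <= tP by rewrite -(ler_pM2r dQ_gt0); lra.
have tQ_ge0 : 0 <= tQ by rewrite divr_ge0 //; lra.
have tQ_dP_le : tQ * (P1 - P0) <= tP * (P1 - P0) by rewrite ler_pM2r.
exists tQ; split; first by rewrite tQ_ge0 /=; case/andP: tP01; lra.
by do !split; [lra|lra|right; lra].
Qed.

End RealFacts.

Section Infimum.
Variable R : realType.

Lemma inf_image_le (T : Type) (B : set T) (f : T -> R) z :
  (forall w, B w -> 0 <= f w) -> B z -> inf (f @` B) <= f z.
Proof.
move=> f_ge0 Bz; apply: ge_inf; last by exists z.
by exists 0 => _ [w Bw <-]; apply: f_ge0.
Qed.

Lemma le_inf_image (T : Type) (B : set T) (f : T -> R) m :
  B !=set0 -> (forall z, B z -> m <= f z) -> m <= inf (f @` B).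
Proof.
move=> [z Bz] mf; apply: lb_le_inf; first by exists (f z), z.
by move=> _ [w Bw <-]; apply: mf.
Qed.

Lemma le_mul_inf (A B : set R) (c : R) :
  A !=set0 -> B !=set0 -> (forall a, A a -> 0 <= a) -> (forall b, B b -> 0 <= b) ->
  (forall a b, A a -> B b -> c <= a * b) -> c <= inf A * inf B.
Proof.
move=> [a0 Aa0] [b0 Bb0] A_ge0 B_ge0 c_le.
have infA_ge0 : 0 <= inf A by apply: lb_le_inf; [exists a0|].
have infB_ge0 : 0 <= inf B by apply: lb_le_inf; [exists b0|].
have [c_le0|c_gt0] := lerP c 0; first by apply: le_trans c_le0 _; rewrite mulr_ge0.
have pos_of_le (u v : R) : 0 <= u -> c <= u * v -> 0 < u.
  move=> u_ge0 cuv; rewrite lt_neqAle u_ge0 andbT; apply/eqP => u0.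
  by move: cuv; rewrite -u0 mul0r; lra.
have c_le_infA b : B b -> c <= inf A * b.
  move=> Bb; have b_gt0 : 0 < b by apply: (pos_of_le b a0); rewrite ?B_ge0 // mulrC c_le.
  rewrite -ler_pdivrMr //; apply: lb_le_inf; first by exists a0.
  by move=> a Aa; rewrite ler_pdivrMr // c_le.
have infA_gt0 : 0 < inf A by apply: (pos_of_le _ b0); rewrite ?c_le_infA.
rewrite mulrC -ler_pdivrMr //; apply: lb_le_inf; first by exists b0.
by move=> b Bb; rewrite ler_pdivrMr // mulrC c_le_infA.
Qed.

End Infimum.

Section Plane.
Variable R : realType.
Implicit Types (u v x y z a b : R * R) (s t : R).

Definition cdot u v : R := u.1 * v.1 + u.2 * v.2.

Lemma cabs_ge0 u : 0 <= cabs u.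
Proof. exact: sqrtr_ge0. Qed.

Lemma cabs_sqr u : cabs u ^+ 2 = cdot u u.
Proof. by rewrite sqr_sqrtr // addr_ge0 // sqr_ge0. Qed.

Lemma cabs_eq0 u : cabs u = 0 -> u = (0, 0).
Proof.
move=> u0; have : cdot u u = 0 by rewrite -cabs_sqr u0 expr0n.
case: u {u0} => u1 u2; rewrite /cdot /= => /eqP; rewrite paddr_eq0 ?sqr_ge0 // !sqrf_eq0.
by case/andP=> /eqP -> /eqP ->.
Qed.

Lemma cabs_scale t a : cabs (t * a.1, t * a.2) = `|t| * cabs a.
Proof. by rewrite /cabs /= !exprMn -mulrDr sqrtrM ?sqr_ge0 // sqrtr_sqr. Qed.

Lemma normr2_le_cabs u : `|u.2| <= cabs u.
Proof. by rewrite -sqrtr_sqr ler_wsqrtr // lerDr sqr_ge0. Qed.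

Lemma normr1_le_cabs u : `|u.1| <= cabs u.
Proof. by rewrite -sqrtr_sqr ler_wsqrtr // lerDl sqr_ge0. Qed.

Lemma cdot_le_cabs u v : cdot u v <= cabs u * cabs v.
Proof.
have [uv_le0|uv_gt0] := lerP (cdot u v) 0.
  by apply: le_trans uv_le0 _; rewrite mulr_ge0 // cabs_ge0.
rewrite -(ger0_norm (ltW uv_gt0)) -sqrtr_sqr /cabs -sqrtrM ?addr_ge0 ?sqr_ge0 //.
rewrite ler_sqrt ?mulr_ge0 ?addr_ge0 ?sqr_ge0 // /cdot.
have := sqr_ge0 (u.1 * v.2 - u.2 * v.1); nra.
Qed.

Lemma cabs_csub_triangle x y z :
  cabs (csub x y) <= cabs (csub x z) + cabs (csub z y).
Proof.
rewrite -ler_sqr ?nnegrE ?addr_ge0 ?cabs_ge0 // sqrrD !cabs_sqr.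
have := cdot_le_cabs (csub x z) (csub z y); rewrite /cdot /=; nra.
Qed.

Definition seg_point z x t : R * R :=
  (z.1 + t * (x.1 - z.1), z.2 + t * (x.2 - z.2)).

Lemma detour_seg_point x y z t : 0 <= t <= 1 ->
  cabs (csub x (seg_point z x t)) + cabs (csub (seg_point z x t) y)
  <= cabs (csub x z) + cabs (csub z y).
Proof.
case/andP=> t_ge0 t_le1.
have -> : csub x (seg_point z x t) = ((1 - t) * (csub x z).1, (1 - t) * (csub x z).2).
  by rewrite /csub /=; congr pair; ring.
have zz' : csub (seg_point z x t) z = (t * (csub x z).1, t * (csub x z).2).
  by rewrite /csub /=; congr pair; ring.
have := cabs_csub_triangle (seg_point z x t) y z; rewrite zz' !cabs_scale.
rewrite !ger0_norm ?subr_ge0 //; lra.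
Qed.

Definition ratio_point a b s t : R * R :=
  ((t * a.1 + s * b.1) / (s + t), (t * a.2 + s * b.2) / (s + t)).

Lemma ratio_point_identity x y a b s t : s + t != 0 ->
  (s + t) * (t * cabs (csub x (ratio_point a b s t)) ^+ 2
             + s * cabs (csub (ratio_point a b s t) y) ^+ 2) =
  (s + t) * (t * cabs (csub x a) ^+ 2 + s * cabs (csub y b) ^+ 2)
  + s * t * (2 * cdot (csub y b) (csub b a) - 2 * cdot (csub x a) (csub b a)
             + cabs (csub b a) ^+ 2).
Proof. by move=> st0; rewrite !cabs_sqr /cdot /=; field. Qed.

Lemma detour_ratio_point x y a b s t :
  cabs (csub x a) = s -> cabs (csub y b) = t -> 0 < s -> 0 < t ->
  (cabs (csub x (ratio_point a b s t)) + cabs (csub (ratio_point a b s t) y)) ^+ 2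
  <= cabs (csub x y) ^+ 2 + 4 * s * t.
Proof.
move=> xaE ybE s_gt0 t_gt0.
have st_gt0 : 0 < s * t by rewrite mulr_gt0.
have := ratio_point_identity x y a b (lt0r_neq0 (addr_gt0 s_gt0 t_gt0)).
rewrite xaE ybE => stewart.
have xyE : cabs (csub x y) ^+ 2 = s ^+ 2 + t ^+ 2 + cabs (csub b a) ^+ 2
    - 2 * cdot (csub x a) (csub y b) - 2 * cdot (csub x a) (csub b a)
    + 2 * cdot (csub y b) (csub b a).
  by rewrite -xaE -ybE !cabs_sqr /cdot /=; ring.
have cs := cdot_le_cabs (csub x a) (csub y b); rewrite xaE ybE in cs.
rewrite -(ler_pM2l st_gt0); apply: le_trans (mulr_sqrD_le s t _ _) _.
rewrite stewart xyE; nra.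
Qed.

Lemma cabs_csub_vertical (k l : R) : cabs (csub (0, k) (0, l)) = `|k - l|.
Proof. by rewrite /cabs /csub /= subrr expr0n add0r sqrtr_sqr. Qed.

Lemma cabs_csub_i_2i : cabs (csub (0, 1) (0, 2)) = 1 :> R.
Proof. by rewrite cabs_csub_vertical ler0_norm; lra. Qed.

End Plane.

Section Wedge.
Variable R : realType.
Implicit Types (th r t : R) (w z v : R * R).

Lemma sin_le0_pi2 t : pi <= t <= 2 * pi -> sin t <= 0.
Proof.
case/andP=> pi_le_t t_le.
by rewrite -[t](subrK pi) sinDpi oppr_le0 sin_ge0_pi //; apply/andP; split; lra.
Qed.

Lemma polar_coords w :
  exists2 t, 0 <= t <= 2 * pi & w = (cabs w * cos t, cabs w * sin t).
Proof.
have pi_gt0 := @pi_gt0 R.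
set r := cabs w; have [r0|r_neq0] := eqVneq r 0.
  exists 0; first by rewrite lexx /= mulr_ge0 // ltW.
  by rewrite r0 !mul0r; apply: cabs_eq0.
have r_gt0 : 0 < r by rewrite lt_neqAle eq_sym r_neq0 cabs_ge0.
have c_bd : -1 <= w.1 / r <= 1.
  by rewrite -ler_norml normf_div (gtr0_norm r_gt0) ler_pdivrMr // mul1r normr1_le_cabs.
pose t0 := acos (w.1 / r).
have t0_bd : 0 <= t0 <= pi by rewrite acos_ge0 // acos_lepi.
have cos_t0 : r * cos t0 = w.1 by rewrite acosK ?in_itv // mulrC divfK.
have sin_t0 : r * sin t0 = `|w.2|.
  have r2 : r ^+ 2 = w.1 ^+ 2 + w.2 ^+ 2 by rewrite cabs_sqr /cdot !expr2.
  have sqE : 1 - (w.1 / r) ^+ 2 = (w.2 / r) ^+ 2.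
    apply: (mulIf (expf_neq0 2 r_neq0)).
    by rewrite mulrBl mul1r -!exprMn !divfK // r2; ring.
  by rewrite sin_acos // sqE sqrtr_sqr normf_div (gtr0_norm r_gt0) mulrC divfK.
have [w2_ge0|w2_lt0] := lerP 0 w.2.
  exists t0; first by case/andP: t0_bd => ? ?; apply/andP; split; lra.
  by rewrite cos_t0 sin_t0 ger0_norm // -surjective_pairing.
exists (2 * pi - t0); first by case/andP: t0_bd => ? ?; apply/andP; split; lra.
rewrite mulr_natl cosB sinB cos2pi sin2pi !mul1r !mul0r addr0 sub0r mulrN.
by rewrite cos_t0 sin_t0 ltr0_norm // opprK -surjective_pairing.
Qed.

(* [rayf th] vanishes on the line carrying the ray of angle [th] and is
   positive on the side of the angles just below [th]; for [pi <= th < 2 pi]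
   the sector is [Shalf th], its complement [Ccone th], its boundary [Bcone th]. *)
Definition rayf th w : R := sin th * w.1 - cos th * w.2.

Definition Shalf th : set (R * R) := [set w | 0 < w.2 \/ 0 < rayf th w].

Definition Ccone th : set (R * R) := [set w | w.2 <= 0 /\ rayf th w <= 0].

Definition Bcone th : set (R * R) :=
  [set w | Ccone th w /\ (w.2 = 0 \/ rayf th w = 0)].

Lemma Shalf_polar th r t : 0 < r ->
  Shalf th (r * cos t, r * sin t) <-> 0 < sin t \/ 0 < sin (th - t).
Proof.
move=> r_gt0; rewrite /Shalf /=.
have -> : rayf th (r * cos t, r * sin t) = r * sin (th - t) by rewrite /rayf /= sinB; ring.
by rewrite !pmulr_rgt0.
Qed.

Lemma Stheta_Shalf th : pi <= th -> th < 2 * pi -> Stheta th = Shalf th.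
Proof.
move=> pi_le_th th_lt; apply/seteqP; split=> [w [r [t [r_gt0 [t_gt0 [t_lt ->]]]]]|w w_in].
  apply/Shalf_polar => //; have [t_lt_pi|pi_le_t] := ltP t pi.
    by left; rewrite sin_gt0_pi // t_gt0.
  by right; rewrite sin_gt0_pi //; apply/andP; split; lra.
have [t t_bd wE] := polar_coords w.
have r_gt0 : 0 < cabs w.
  rewrite lt_neqAle cabs_ge0 andbT eq_sym; apply/eqP => /cabs_eq0 w0.
  by move: w_in; rewrite w0 /Shalf /rayf /= !mulr0 subrr ltxx; case.
rewrite wE in w_in; move/(Shalf_polar _ _ r_gt0): w_in => sin_gt0.
case/andP: t_bd => t_ge0 t_le.
have th_bd : pi <= th <= 2 * pi by rewrite pi_le_th ltW.
exists (cabs w), t; do !split => //.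
  rewrite lt_neqAle t_ge0 andbT; apply/eqP => t0.
  move: sin_gt0; rewrite -t0 sin0 subr0 ltxx => -[//|].
  by have := sin_le0_pi2 th_bd; lra.
rewrite ltNge; apply/negP => th_le_t.
have : sin t <= 0 by apply: sin_le0_pi2; apply/andP; split; lra.
have : 0 <= sin (t - th).
  by apply: sin_ge0_pi; apply/andP; split; lra.
rewrite -[th - t]opprB sinN in sin_gt0.
by case: sin_gt0; lra.
Qed.

Lemma ball_pairP z v (e : R) :
  ball z e v <-> `|z.1 - v.1| < e /\ `|z.2 - v.2| < e.
Proof. by split=> [[]|[? ?]]. Qed.

Lemma rayf_lipschitz th z v :
  `|rayf th v - rayf th z| <= `|z.1 - v.1| + `|z.2 - v.2|.
Proof.
have -> : rayf th v - rayf th z = sin th * (v.1 - z.1) - cos th * (v.2 - z.2).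
  by rewrite /rayf; ring.
apply: le_trans (ler_normB _ _) _; rewrite !normrM (distrC v.1) (distrC v.2).
by apply: lerD; apply: ler_piMl => //; [apply: sin_max | apply: cos_max].
Qed.

Lemma open_Shalf th : open (Shalf th).
Proof.
rewrite openE => w w_in; apply/nbhs_ballP; case: w_in => [w2_gt0|rw_gt0].
  exists w.2 => // v /ball_pairP[_]; rewrite ltr_norml => /andP[? ?]; left; lra.
exists (rayf th w / 2) => [|v /ball_pairP[? ?]]; first by rewrite /= divr_gt0.
by right; have := rayf_lipschitz th w v; rewrite ler_norml => /andP[? ?]; lra.
Qed.

Lemma Ccone_Shalf_disj th w : Ccone th w -> ~ Shalf th w.
Proof. by case=> ? ? []; lra. Qed.

Lemma closure_Shalf_setC th z : closure (Shalf th) z -> ~ Shalf th z -> Bcone th z.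
Proof.
move=> z_cl z_out.
have [z2_le0 rz_le0] : Ccone th z.
  by split; rewrite leNgt; apply/negP => ?; apply: z_out; [left|right].
split=> //; have [|z2_neq0] := eqVneq z.2 0; first by left.
have [|rz_neq0] := eqVneq (rayf th z) 0; first by right.
pose e := Num.min (- z.2) (- rayf th z / 2).
have z2_lt0 : z.2 < 0 by rewrite lt_neqAle z2_neq0.
have rz_lt0 : rayf th z < 0 by rewrite lt_neqAle rz_neq0.
have e_gt0 : 0 < e by rewrite lt_min; apply/andP; split; [|rewrite divr_gt0]; lra.
have [v [v_in /ball_pairP[v1 v2]]] : Shalf th `&` ball z e !=set0.
  by apply: z_cl; apply/nbhs_ballP; exists e.
have e_le1 : e <= - z.2 by rewrite ge_min lexx.
have e_le2 : e <= - rayf th z / 2 by rewrite ge_min lexx orbT.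
have := rayf_lipschitz th z v; rewrite ler_norml => /andP[? ?].
by have := v2; rewrite ltr_norml => /andP[? ?]; case: v_in; lra.
Qed.

Lemma Bcone_closure_Shalf th z : Bcone th z -> closure (Shalf th) z.
Proof.
move=> [_ z_edge] B /nbhs_ballP[e /= e_gt0 zeB].
have e2_gt0 : 0 < e / 2 by rewrite divr_gt0.
case: z_edge => [z2_0|rz_0].
  exists (z.1, z.2 + e / 2); split; first by left; rewrite /= z2_0 add0r.
  apply: zeB; apply/ball_pairP; rewrite /= subrr normr0 opprD addNKr normrN gtr0_norm //.
  by split; lra.
pose v := (z.1 + e / 2 * sin th, z.2 - e / 2 * cos th).
exists v; split.
  right; have -> : rayf th v = rayf th z + e / 2 * (cos th ^+ 2 + sin th ^+ 2).
    by rewrite /rayf /=; ring.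
  by rewrite cos2Dsin2 mulr1 rz_0 add0r.
apply: zeB; apply/ball_pairP.
have -> : z.1 - v.1 = - (e / 2 * sin th) by rewrite /=; ring.
have -> : z.2 - v.2 = e / 2 * cos th by rewrite /=; ring.
rewrite normrN !(normrM (e / 2)) (gtr0_norm e2_gt0).
have := ler_piMr (ltW e2_gt0) (sin_max th); have := ler_piMr (ltW e2_gt0) (cos_max th).
by split; lra.
Qed.

Lemma bdry_Shalf th : bdry (Shalf th) = Bcone th.
Proof.
rewrite /bdry.
have -> : interior (Shalf th) = Shalf th by apply/interior_id; exact: open_Shalf.
apply/seteqP; split=> z.
  by case; apply: closure_Shalf_setC.
move=> z_B; split; first exact: Bcone_closure_Shalf.
by case: z_B => /Ccone_Shalf_disj.
Qed.

End Wedge.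

Section Estimate.
Variables (R : realType) (th : R).
Implicit Types (x y z a b : R * R) (s t : R).

Lemma Bcone0 : Bcone th (0, 0).
Proof. by rewrite /Bcone /Ccone /rayf /= !mulr0 subrr; split; [split|left]. Qed.

Lemma Ccone_ratio_point a b s t : 0 < s -> 0 < t ->
  Ccone th a -> Ccone th b -> Ccone th (ratio_point a b s t).
Proof.
move=> s_gt0 t_gt0 [a2 ra] [b2 rb]; have st_gt0 : 0 < s + t by rewrite addr_gt0.
have rE : rayf th (ratio_point a b s t) = (t * rayf th a + s * rayf th b) / (s + t).
  by rewrite /rayf /=; field; rewrite gt_eqF.
have nonpos_comb u v : u <= 0 -> v <= 0 -> (t * u + s * v) / (s + t) <= 0.
  move=> u_le0 v_le0; rewrite pmulr_lle0 ?invr_gt0 //.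
  by have := mulr_ge0_le0 (ltW t_gt0) u_le0; have := mulr_ge0_le0 (ltW s_gt0) v_le0; lra.
by split; rewrite ?rE; apply: nonpos_comb.
Qed.

Lemma csub_Shalf_Ccone_gt0 x a : Shalf th x -> Ccone th a -> 0 < cabs (csub x a).
Proof.
move=> x_in a_in; rewrite lt_neqAle cabs_ge0 andbT eq_sym; apply/eqP.
move=> /cabs_eq0 [/eqP + /eqP]; rewrite !subr_eq0 => /eqP x1 /eqP x2.
apply: (Ccone_Shalf_disj a_in).
by move: x_in; rewrite [x]surjective_pairing x1 x2 -surjective_pairing.
Qed.

Lemma Bcone_detour x y z : Shalf th x -> Ccone th z ->
  exists2 z', Bcone th z' &
    cabs (csub x z') + cabs (csub z' y) <= cabs (csub x z) + cabs (csub z y).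
Proof.
move=> x_in [z2 rz].
have [t [t01 [seg2 [segr seg_edge]]]] := affine_exit_time z2 rz x_in.
exists (seg_point z x t); last exact: detour_seg_point.
have rE : rayf th (seg_point z x t) = rayf th z + t * (rayf th x - rayf th z).
  by rewrite /rayf /=; ring.
by split; [split|]; rewrite ?rE.
Qed.

Let detour x y := inf [set cabs (csub x z) + cabs (csub z y) | z in Bcone th].
Let dist x := inf [set cabs (csub x z) | z in Bcone th].

Lemma sqr_inf_detour_le x y : Shalf th x -> Shalf th y ->
  detour x y ^+ 2 <= cabs (csub x y) ^+ 2 + 4 * dist x * dist y.
Proof.
move=> x_in y_in.
have detour_ge0 : 0 <= detour x y.
  apply: le_inf_image => [|z _]; last by rewrite addr_ge0 ?cabs_ge0.
  by exists (0, 0); exact: Bcone0.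
suff : (detour x y ^+ 2 - cabs (csub x y) ^+ 2) / 4 <= dist x * dist y by rewrite -!mulrA; lra.
apply: le_mul_inf.
- by exists (cabs (csub x (0, 0))), (0, 0); first exact: Bcone0.
- by exists (cabs (csub y (0, 0))), (0, 0); first exact: Bcone0.
- by move=> _ [z _ <-]; exact: cabs_ge0.
- by move=> _ [z _ <-]; exact: cabs_ge0.
move=> _ _ [a [a_cone _] <-] [b [b_cone _] <-].
have s_gt0 := csub_Shalf_Ccone_gt0 x_in a_cone.
have t_gt0 := csub_Shalf_Ccone_gt0 y_in b_cone.
pose z := ratio_point a b (cabs (csub x a)) (cabs (csub y b)).
have z_cone : Ccone th z := Ccone_ratio_point s_gt0 t_gt0 a_cone b_cone.
have z_le := detour_ratio_point erefl erefl s_gt0 t_gt0; rewrite -/z in z_le.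
have [z' z'_B z'_le] := Bcone_detour y x_in z_cone.
have : detour x y ^+ 2 <= (cabs (csub x z) + cabs (csub z y)) ^+ 2.
  rewrite ler_sqr ?nnegrE ?addr_ge0 ?cabs_ge0 //; apply: le_trans z'_le.
  by apply: inf_image_le z'_B => w _; rewrite addr_ge0 ?cabs_ge0.
rewrite ler_pdivrMr //; lra.
Qed.

Lemma pG_le_sG_Shalf x y : Shalf th x -> Shalf th y ->
  pG (Shalf th) x y <= sG (Shalf th) x y.
Proof.
move=> x_in y_in; have T2_le := sqr_inf_detour_le x_in y_in.
rewrite /pG /sG /dG bdry_Shalf -/(detour x y) -/(dist x) -/(dist y).
set T := detour x y in T2_le *; set N := cabs (csub x y) in T2_le *.
have N_le_T : N <= T.
  apply: le_inf_image => [|z _]; last exact: cabs_csub_triangle.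
  by exists (0, 0); exact: Bcone0.
have [->|N_neq0] := eqVneq N 0; first by rewrite !mul0r.
have N_gt0 : 0 < N by rewrite lt_neqAle eq_sym N_neq0 cabs_ge0.
have T_gt0 : 0 < T := lt_le_trans N_gt0 N_le_T.
have T_le : T <= Num.sqrt (N ^+ 2 + 4 * dist x * dist y).
  by rewrite -(ger0_norm (ltW T_gt0)) -sqrtr_sqr ler_wsqrtr.
by rewrite ler_pM2l // lef_pV2 // posrE (lt_le_trans T_gt0 T_le).
Qed.

Lemma sG_Shalf_i_2i : 0 < sG (Shalf th) (0, 1) (0, 2) <= 3^-1.
Proof.
rewrite /sG bdry_Shalf cabs_csub_i_2i mul1r.
set T := inf _; have T_ge3 : 3 <= T.
  apply: le_inf_image => [|z [[z2_le0 _] _]]; first by exists (0, 0); exact: Bcone0.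
  have /ler_normlP[_ xz_ge] := normr2_le_cabs (csub (0, 1) z).
  have /ler_normlP[zy_ge _] := normr2_le_cabs (csub z (0, 2)).
  have zy_ge' : 2 - z.2 <= cabs (csub z (0, 2)) by rewrite -opprB.
  by move: xz_ge => /=; lra.
by rewrite invr_gt0 lef_pV2 ?posrE; lra.
Qed.

Lemma pG_Shalf_i_2i : 3^-1 <= pG (Shalf th) (0, 1) (0, 2).
Proof.
rewrite /pG /dG bdry_Shalf cabs_csub_i_2i mul1r.
have d_bd (k : R) : 0 <= k -> 0 <= inf [set cabs (csub (0, k) z) | z in Bcone th] <= k.
  move=> k_ge0; apply/andP; split.
    by apply: le_inf_image => [|z _]; [exists (0, 0); exact: Bcone0 | exact: cabs_ge0].
  apply: le_trans (inf_image_le (fun z _ => cabs_ge0 _) Bcone0) _.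
  by rewrite cabs_csub_vertical subr0 ger0_norm.
have /andP[dx_ge0 dx_le1] := d_bd 1 ler01.
have /andP[dy_ge0 dy_le2] := d_bd 2 ltac:(lra).
set dx := inf _ in dx_ge0 dx_le1 *; set dy := inf _ in dy_ge0 dy_le2 *.
have dxdy_le : dx * dy <= 1 * 2 := ler_pM dx_ge0 dy_ge0 dx_le1 dy_le2.
have dxdy_ge0 : 0 <= dx * dy := mulr_ge0 dx_ge0 dy_ge0.
have rad_gt0 : 0 < 1 ^+ 2 + 4 * dx * dy by rewrite -mulrA expr1n; lra.
rewrite lef_pV2 ?posrE ?sqrtr_gt0 //.
have -> : 3 = Num.sqrt (3 ^+ 2) :> R by rewrite sqrtr_sqr ger0_norm.
rewrite ler_wsqrtr //.
by rewrite -mulrA; lra.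
Qed.

End Estimate.

Theorem theorem3p9 (R : realType) (theta : R) :
  pi <= theta -> theta < 2 * pi ->
  (forall x y : R * R, Stheta theta x -> Stheta theta y ->
     pG (Stheta theta) x y <= sG (Stheta theta) x y) /\
  (forall c : R, c < 1 -> exists x y : R * R,
     Stheta theta x /\ Stheta theta y /\
     c * sG (Stheta theta) x y < pG (Stheta theta) x y).
Proof.
move=> pi_le th_lt; rewrite (Stheta_Shalf pi_le th_lt).
split=> [x y|c c_lt1]; first exact: pG_le_sG_Shalf.
exists (0, 1), (0, 2); do !split; try by left => /=; lra.
have /andP[s_gt0 s_le] := sG_Shalf_i_2i theta.
by apply: lt_le_trans (le_trans s_le (pG_Shalf_i_2i theta)); rewrite gtr_pMl.
Qed.
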